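(* Let $x\ge 0$ and $y$ be integers with $M(x,y)\neq\emptyset$, and let $G_0$ be a minimal graph in $M(x,y)$. If $G_0$ is nonseparable, then (a) $|V(G_0)|=4f(G_0)-2x-1$; (b) $4f(G_0)-2x-1<R(f(G_0)-x+1,3)$.
   Context: All graphs are finite, simple and undirected; the empty graph (with no vertices) is allowed, with $\chi=\mathrm{cl}=0$. $\mathrm{cl}(G)$ is the clique number, $\chi(G)$ the chromatic number, and $f(G)=\chi(G)-\mathrm{cl}(G)$. For integers $x,y$, $M(x,y)=\{G: |V(G)|<\chi(G)+2f(G)-x \text{ and } f(G)\le y\}$. A graph $G_0$ in a nonempty set $\mathcal M$ of graphs is minimal in $\mathcal M$ if $|V(G_0)|=\min\{|V(G)|:G\in\mathcal M\}$. For vertex-disjoint graphs $G_1,G_2$, $G_1+G_2$ is the graph on $V(G_1)\cup V(G_2)$ whose edges are those of $G_1$, those of $G_2$, and all pairs $\{u,v\}$ with $u\in V(G_1)$, $v\in V(G_2)$ (the join). $G$ is separable if $G=G_1+G_2$ with $V(G_1)\neq\emptyset$ and $V(G_2)\neq\emptyset$; otherwise nonseparable. $R(p,3)$ is the least $n$ such that every graph on at least $n$ vertices has a $p$-clique or an independent set of size $3$. *)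

From HB Require Import structures.
From mathcomp Require Import all_boot all_order all_algebra.
Set Implicit Arguments. Unset Strict Implicit. Unset Printing Implicit Defensive.
Import Order.TTheory GRing.Theory Num.Theory.
Local Open Scope ring_scope.
Local Open Scope nat_scope.

Record sgraph := SGraph {
  nv : nat;
  adj : rel 'I_nv;
  adj_sym : symmetric adj;
  adj_irr : irreflexive adj }.

Section Graph.
Variable G : sgraph.

Definition is_clique (K : {set 'I_(nv G)}) : bool :=
  [forall u in K, forall v in K, (u != v) ==> @adj G u v].

Definition is_indep (I : {set 'I_(nv G)}) : bool :=
  [forall u in I, forall v in I, ~~ @adj G u v].

Definition cl : nat := \max_(K : {set 'I_(nv G)} | is_clique K) #|K|.

Definition colorable (k : nat) : bool :=
  [exists c : {ffun 'I_(nv G) -> 'I_k},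
     [forall u, forall v, @adj G u v ==> (c u != c v)]].

(* chromatic number: least k <= nv G such that G is k-colourable
   (G is always nv G-colourable, so this is the least k overall). *)
Definition chi : nat := \big[minn/nv G]_(k < (nv G).+1 | colorable k) k.

Definition f : int := (chi%:Z - cl%:Z)%R.

(* G = G1 + G2 with both parts nonempty: the vertex set splits into two
   nonempty parts A, ~A with every vertex of A adjacent to every vertex of ~A
   (G1, G2 are then the induced subgraphs on A and ~A). *)
Definition separable : Prop :=
  exists A : {set 'I_(nv G)},
    A != set0 /\ ~: A != set0 /\
    (forall u v, u \in A -> v \notin A -> @adj G u v).

End Graph.

Definition inM (x y : int) (G : sgraph) : Prop :=
  ((nv G)%:Z < (chi G)%:Z + 2 * f G - x)%R /\ (f G <= y)%R.

Definition ramsey_ok (p : int) (m : nat) : Prop :=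
  forall G : sgraph, m <= nv G ->
    (exists K : {set 'I_(nv G)}, is_clique K /\ (#|K|%:Z = p)) \/
    (exists I : {set 'I_(nv G)}, is_indep I /\ #|I| = 3).

Definition is_R3 (p : int) (r : nat) : Prop :=
  ramsey_ok p r /\ forall m, ramsey_ok p m -> r <= m.

(* Write chi(R), cl(R) and f(R) = chi(R) - cl(R) for the induced subgraph
   G[R].  The proof has three parts.
   1. Minimality.  Deleting a vertex lowers f by at most one, so f takes every
      value between 0 and f(R) on subsets of R; a proper G[R'] with
      f(R') = f(G) would lie in M(x,y).  Hence f(R) < f(G) for every proper R,
      so deleting a nonempty independent set I lowers chi by exactly one and
      keeps cl, and comparing G[V \ I] with M(x,y) gives
      |I| + 3 chi <= |V| + 2 cl + x + 3.  Thus G has no independent 3-set, and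
      |V| = 3 chi - 2 cl - x - 1 since G is not complete.
   2. Colourings and co-matchings.  Matchings of the complement of G, encoded
      as involutions, give colourings with 2 chi(R) <= |R| + #unmatched; when
      G has no independent 3-set, colour classes pair up into such matchings.
   3. Gallai's lemma, proved with the alternating cycles of two involutions:
      every vertex is missed by an optimal co-matching (colour G - v) and the
      complement of G is connected (G is nonseparable), so optimal
      co-matchings miss exactly one vertex and |V| = 2 chi - 1.
   The two formulas for |V| give chi = 2 cl + x, whence (a); and (b) holds
   because G itself has neither a (cl + 1)-clique nor an independent 3-set. *)

From HB Require Import structures.
From mathcomp Require Import all_boot all_order all_algebra.
From mathcomp Require Import zify.
Set Implicit Arguments. Unset Strict Implicit. Unset Printing Implicit Defensive.
Import Order.TTheory GRing.Theory Num.Theory.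

(* The rank of [v] in a set [A] of ordinals: the number of elements of [A]
   below [v].  It maps [A] injectively below [#|A|], so it is a proper
   colouring of any graph on [A] with [#|A|] colours. *)
Definition rank_in m (A : {set 'I_m}) (v : 'I_m) : nat := #|[set w in A | w < v]|.

Lemma rank_in_lt m (A : {set 'I_m}) v : v \in A -> rank_in A v < #|A|.
Proof.
move=> vA; apply: proper_card; apply/properP; split.
  by apply/subsetP=> w; rewrite inE => /andP[].
by exists v; rewrite // inE ltnn andbF.
Qed.

Lemma rank_in_mono m (A : {set 'I_m}) (u v : 'I_m) :
  u \in A -> u < v -> rank_in A u < rank_in A v.
Proof.
move=> uA uv; apply: proper_card; apply/properP; split.
  by apply/subsetP=> w; rewrite !inE => /andP[-> /ltn_trans]; apply.
by exists u; rewrite !inE ?uA ?uv // ltnn andbF.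
Qed.

Lemma rank_in_inj m (A : {set 'I_m}) : {in A &, injective (rank_in A)}.
Proof.
move=> u v uA vA e; case: (ltngtP u v) => [uv|vu|/val_inj //].
  by move: (rank_in_mono uA uv); rewrite e ltnn.
by move: (rank_in_mono vA vu); rewrite e ltnn.
Qed.

Section InducedInvariants.
Variable G : sgraph.
Local Notation n := (nv G).
Local Notation V := 'I_n.
Local Notation E := (@adj G).
Implicit Types (R I K : {set V}) (k : nat).

Lemma card_le_n R : #|R| <= n.
Proof. by rewrite -[X in _ <= X]card_ord max_card. Qed.

Lemma adj_neq u v : E u v -> u != v.
Proof. by apply: contraTneq => ->; rewrite adj_irr. Qed.

Lemma indepP I : reflect (forall u v, u \in I -> v \in I -> ~~ E u v) (is_indep I).
Proof.
apply: (iffP forallP) => [H u v uI vI|H u].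
  by move/implyP: (H u) => /(_ uI)/forallP/(_ v)/implyP; apply.
by apply/implyP=> uI; apply/forallP=> v; apply/implyP; apply: H.
Qed.

Lemma indep1 v : @is_indep G [set v].
Proof. by apply/indepP=> a b; rewrite !inE => /eqP-> /eqP->; rewrite adj_irr. Qed.

Lemma cliqueP K :
  reflect (forall u v, u \in K -> v \in K -> u != v -> E u v) (is_clique K).
Proof.
apply: (iffP forallP) => [H u v uK vK uv|H u].
  by move/implyP: (H u) => /(_ uK)/forallP/(_ v)/implyP/(_ vK)/implyP; apply.
apply/implyP=> uK; apply/forallP=> v; apply/implyP=> vK; apply/implyP; exact: H.
Qed.

(* [colS R k]: G[R] has a proper colouring with colours below [k].  Colours
   are taken in ['I_n.+1] to keep the predicate boolean; this is no loss,
   since [n] colours always suffice. *)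
Definition colS R k : bool :=
  [exists c : {ffun V -> 'I_n.+1},
     [forall u in R, c u < k] &&
     [forall u in R, forall v in R, E u v ==> (c u != c v)]].

Lemma colS_intro R k (c : V -> nat) : k <= n.+1 ->
  (forall u, u \in R -> c u < k) ->
  (forall u v, u \in R -> v \in R -> E u v -> c u != c v) -> colS R k.
Proof.
move=> kn ck cp; have cn u : u \in R -> c u < n.+1 by move/ck/leq_trans; apply.
apply/existsP; exists [ffun u => inord (c u)]; apply/andP; split.
  by apply/forallP=> u; apply/implyP=> uR; rewrite ffunE inordK ?ck ?cn.
apply/forallP=> u; apply/implyP=> uR; apply/forallP=> v; apply/implyP=> vR.
by apply/implyP=> Euv; rewrite !ffunE -(inj_eq val_inj) /= !inordK ?cn ?cp.
Qed.

Lemma colS_elim R k : colS R k -> exists c : V -> nat,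
  (forall u, u \in R -> c u < k) /\
  (forall u v, u \in R -> v \in R -> E u v -> c u != c v).
Proof.
case/existsP=> c /andP[/forallP ck /forallP cp]; exists (fun u => val (c u)).
split=> [u uR|u v uR vR Euv]; first by move/implyP: (ck u); apply.
by move/implyP: (cp u) => /(_ uR)/forallP/(_ v)/implyP/(_ vR)/implyP/(_ Euv).
Qed.

Lemma colS_n R : colS R n.
Proof.
apply: (@colS_intro _ _ val) => // [u _|u v _ _ /adj_neq]; first exact: ltn_ord.
by rewrite (inj_eq val_inj).
Qed.

Definition chiS R : nat := ex_minn (ex_intro (colS R) n (colS_n R)).

Lemma chiS_col R : colS R (chiS R).
Proof. by rewrite /chiS; case: ex_minnP. Qed.

Lemma chiS_min R k : colS R k -> chiS R <= k.
Proof. by rewrite /chiS; case: ex_minnP => m _; apply. Qed.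

Lemma chiS_le_n R : chiS R <= n.
Proof. exact/chiS_min/colS_n. Qed.

(* Colouring every vertex by its rank: chi(R) <= |R|. *)
Lemma chiS_card R : chiS R <= #|R|.
Proof.
apply/chiS_min/(@colS_intro _ _ (rank_in R)) => [|u /rank_in_lt //|u v uR vR Euv].
  exact/ltnW/card_le_n.
by apply: contra (adj_neq Euv) => /eqP/(rank_in_inj uR vR)->.
Qed.

(* Removing an independent set lowers the chromatic number by at most one:
   its vertices can all receive one new colour. *)
Lemma chiS_indep R I : is_indep I -> chiS R <= (chiS (R :\: I)).+1.
Proof.
move/indepP=> Ii; apply: chiS_min; set k := chiS (R :\: I).
have [c [ck cp]] := colS_elim (chiS_col (R :\: I)).
have inRI u : u \in R -> u \notin I -> u \in R :\: I by rewrite inE => -> ->.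
apply: (@colS_intro _ _ (fun u => if u \in I then k else c u)).
- by rewrite ltnS chiS_le_n.
- by move=> u uR; case: ifPn => // uI; rewrite ltnW // ltnS ck ?inRI.
move=> u v uR vR Euv; case: ifPn => uI; case: ifPn => vI.
- by move: (Ii u v uI vI); rewrite Euv.
- by rewrite eq_sym neq_ltn ck ?inRI.
- by rewrite neq_ltn ck ?inRI.
- by rewrite cp ?inRI.
Qed.

(* Colour G[R] optimally and give each vertex outside R its own new colour. *)
Lemma chiS_split R : chiS [set: V] <= chiS R + #|~: R|.
Proof.
set k := chiS R; have [c [ck cp]] := colS_elim (chiS_col R).
apply/chiS_min/(@colS_intro _ _ (fun u => if u \in R then c u else k + rank_in (~: R) u)).
- by have := chiS_card R; have := cardsC R; rewrite card_ord; lia.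
- move=> u _; case: ifPn => uR; first by rewrite ltn_addr ?ck.
  by rewrite ltn_add2l rank_in_lt ?inE.
move=> u v _ _ Euv; case: ifPn => uR; case: ifPn => vR.
- exact: cp.
- by rewrite neq_ltn ltn_addr ?ck.
- by rewrite eq_sym neq_ltn ltn_addr ?ck.
rewrite eqn_add2l; apply: contra (adj_neq Euv) => /eqP/rank_in_inj-> //; by rewrite inE.
Qed.

Definition clS R : nat := \max_(K : {set V} | (K \subset R) && is_clique K) #|K|.

Lemma clS_max R K : K \subset R -> is_clique K -> #|K| <= clS R.
Proof. by move=> sK cK; apply: (leq_bigmax_cond K); rewrite sK cK. Qed.

Lemma clS_ex R : exists K, [/\ K \subset R, is_clique K & #|K| = clS R].
Proof.
have : 0 < #|[pred K : {set V} | (K \subset R) && is_clique K]|.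
  apply/card_gt0P; exists set0; rewrite inE sub0set /=.
  by apply/cliqueP=> u v; rewrite inE.
case/(eq_bigmax_cond (fun K : {set V} => #|K|)) => K; rewrite inE => /andP[sK cK] e.
by exists K; split; rewrite // /clS -e.
Qed.

Lemma clS_mono R1 R2 : R1 \subset R2 -> clS R1 <= clS R2.
Proof.
move=> sR; have [K [sK cK <-]] := clS_ex R1.
exact/(clS_max _ cK)/(subset_trans sK).
Qed.

Definition fS R : int := (chiS R)%:Z - (clS R)%:Z.

Lemma fS_indep R I : is_indep I -> (fS R - 1 <= fS (R :\: I))%R.
Proof.
move=> Ii; have := chiS_indep R Ii; have := clS_mono (subsetDl R I).
rewrite /fS; lia.
Qed.

(* Discrete intermediate values: since f(G[∅]) = 0 and deleting a vertex
   lowers f by at most one, every value 0 <= t <= f(G[R]) is attained by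
   an induced subgraph of G[R]. *)
Lemma fS_intermediate R (t : int) : (0 <= t)%R -> (t <= fS R)%R ->
  exists2 R' : {set V}, R' \subset R & fS R' = t.
Proof.
move=> t0; have [m] := ubnP #|R|; elim: m R => // m IH R Rm tR.
have [<-|ne] := eqVneq (fS R) t; first by exists R.
have [v vR] : exists v, v \in R.
  apply/set0Pn; apply: contra_neq ne => R0; move: tR (chiS_card R).
  by rewrite /fS R0 cards0; lia.
have Rvm : #|R :\ v| < m by move: Rm; rewrite (cardsD1 v R) vR.
have tRv : (t <= fS (R :\ v))%R.
  by have := fS_indep R (indep1 v); move/eqP: ne; move: tR; lia.
have [R' sR' <-] := IH _ Rvm tRv.
by exists R' => //; apply: subset_trans sR' (subsetDl _ _).
Qed.

End InducedInvariants.

(* [lia] treats cardinalities and graph invariants as atoms, compared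
   syntactically; copies produced by different lemmas may differ in hidden
   coercions, so [card_lia] first folds all convertible copies together. *)
Ltac card_lia :=
  repeat match goal with
  | |- context [#|?A|] => let k := fresh "k" in set k := #|A|
  | |- context [chiS ?R] => let k := fresh "k" in set k := chiS R
  | |- context [clS ?R] => let k := fresh "k" in set k := clS R
  end; lia.

Lemma colorable_nv (H : sgraph) : colorable H (nv H).
Proof.
apply/existsP; exists [ffun i => i]; apply/forallP=> u; apply/forallP=> v.
by apply/implyP=> e; rewrite !ffunE; apply: contraTneq e => ->; rewrite adj_irr.
Qed.

Lemma bigmin_le (I : eqType) (s : seq I) (P : pred I) (F : I -> nat) N i :
  i \in s -> P i -> \big[minn/N]_(j <- s | P j) F j <= F i.
Proof.
elim: s => // a s IH; rewrite inE big_cons => /orP[/eqP<- ->|si Pi].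
  exact: geq_minl.
by case: ifP => _; [apply: leq_trans (geq_minr _ _) _|]; apply: IH.
Qed.

Lemma chi_colorable (H : sgraph) : colorable H (chi H).
Proof.
apply: (big_ind (colorable H)) => [|a b ca cb|//]; first exact: colorable_nv.
by rewrite /minn; case: ifP.
Qed.

Lemma chi_min (H : sgraph) k : colorable H k -> chi H <= k.
Proof.
move=> ck; case: (leqP k (nv H)) => kn.
  exact: (@bigmin_le _ _ _ _ _ (Ordinal (kn : k < (nv H).+1)) (mem_index_enum _) ck).
apply: leq_trans (ltnW kn).
by apply: (big_ind (fun m => m <= nv H)) => // [a b|i _]; [rewrite geq_min => ->|rewrite -ltnS].
Qed.

Section Embedding.
Variables (G H : sgraph) (phi : 'I_(nv H) -> 'I_(nv G)).
Hypothesis phi_inj : injective phi.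
Hypothesis phi_adj : forall i j, @adj H i j = @adj G (phi i) (phi j).
Local Notation R := (phi @: [set: 'I_(nv H)]).

Lemma nv_embed : nv H = #|R|.
Proof. by rewrite card_imset // cardsT card_ord. Qed.

Lemma chi_embed : chi H = chiS R.
Proof.
apply/eqP; rewrite eqn_leq; apply/andP; split.
  apply: chi_min; have [c [ck cp]] := colS_elim (chiS_col R).
  have ck' i : c (phi i) < chiS R by apply/ck/imset_f.
  apply/existsP; exists [ffun i => Ordinal (ck' i)].
  apply/forallP=> u; apply/forallP=> v; apply/implyP=> e; rewrite !ffunE.
  by rewrite -(inj_eq val_inj) /= cp ?imset_f // -phi_adj.
have /existsP[c /forallP cp] := chi_colorable H.
pose c' v := if [pick i | phi i == v] is Some i then val (c i) else 0.
have c'E i : c' (phi i) = c i.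
  by rewrite /c'; case: pickP => [j /eqP/phi_inj -> //|/(_ i)]; rewrite eqxx.
apply/chiS_min/(colS_intro (c := c')).
- by rewrite ltnW // ltnS (leq_trans (chi_min (colorable_nv H))) // nv_embed card_le_n.
- by move=> u /imsetP[i _ ->]; rewrite c'E ltn_ord.
move=> u v /imsetP[i _ ->] /imsetP[j _ ->]; rewrite -phi_adj !c'E => e.
by rewrite (inj_eq val_inj); move/forallP: (cp i) => /(_ j)/implyP; apply.
Qed.

Lemma cl_embed : cl H = clS R.
Proof.
apply/eqP; rewrite eqn_leq; apply/andP; split.
  apply/bigmax_leqP=> K /cliqueP cK; rewrite -(card_imset K phi_inj).
  apply: clS_max; first exact/imsetS/subsetT.
  apply/cliqueP=> u v /imsetP[i iK ->] /imsetP[j jK ->] ne.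
  by rewrite -phi_adj cK //; apply: contraNneq ne => ->.
have [K [sK /cliqueP cK <-]] := clS_ex R.
have eK : phi @: (phi @^-1: K) = K.
  apply/setP=> v; apply/imsetP/idP => [[i]|vK]; first by rewrite inE => iK ->.
  by case/imsetP: (subsetP sK v vK) => i _ e; exists i; rewrite // inE -e.
rewrite -eK card_imset //; apply: leq_bigmax_cond; apply/cliqueP=> i j.
by rewrite !inE phi_adj => iK jK ne; apply: cK => //; rewrite (inj_eq phi_inj).
Qed.

End Embedding.

Lemma chi_setT (G : sgraph) : chi G = chiS [set: 'I_(nv G)].
Proof. by rewrite (@chi_embed G G id) ?imset_id. Qed.

Lemma cl_setT (G : sgraph) : cl G = clS [set: 'I_(nv G)].
Proof. by rewrite (@cl_embed G G id) ?imset_id. Qed.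

Definition induced (G : sgraph) (R : {set 'I_(nv G)}) : sgraph :=
  @SGraph #|R| (fun i j => @adj G (enum_val i) (enum_val j))
    (fun i j => adj_sym _ _) (fun i => adj_irr _).

Lemma induced_invariants (G : sgraph) (R : {set 'I_(nv G)}) :
  chi (induced R) = chiS R /\ cl (induced R) = clS R.
Proof.
have im : (@enum_val _ (mem R)) @: setT = R.
  apply/setP=> v; apply/imsetP/idP => [[i _ ->]|vR]; first exact: enum_valP.
  by exists (enum_rank_in vR v); rewrite ?enum_rankK_in.
rewrite -[in chiS R]im -[in clS R]im.
have inj : injective (@enum_val _ (mem R)) := @enum_val_inj _ _.
by split; [apply: chi_embed|apply: cl_embed].
Qed.

(* A matching of the complement of G is encoded as an
   involution [p] of V(G) that only moves vertices to non-neighbours; its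
   blocks (pairs {v, p v} and unmatched singletons) are independent, so they
   form colour classes of a proper colouring. *)
Definition unmatched m (p : 'I_m -> 'I_m) (R : {set 'I_m}) := [set v in R | p v == v].

(* The least element of each block of [p] inside [R]. *)
Definition leaders m (p : 'I_m -> 'I_m) (R : {set 'I_m}) := [set v in R | v <= p v].

Lemma card_unmatched_split m (p : 'I_m -> 'I_m) (O : {set 'I_m}) :
  #|unmatched p [set: 'I_m]| = #|unmatched p O| + #|unmatched p (~: O)|.
Proof.
rewrite -(cardsID O (unmatched p _)); congr (_ + _); apply: eq_card => v;
  by rewrite !inE; case: (v \in O); rewrite ?andbT ?andbF.
Qed.

(* Each block has one leader and each pair two elements:
   |R| + #unmatched = 2 #blocks. *)
Lemma card_leaders m (p : 'I_m -> 'I_m) (R : {set 'I_m}) :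
  involutive p -> {homo p : v / v \in R} ->
  #|R| + #|unmatched p R| = 2 * #|leaders p R|.
Proof.
move=> pK pR; set F := unmatched p R.
set T1 := [set v in R | v < p v]; set T2 := [set v in R | p v < v].
have eT : #|leaders p R| = #|F| + #|T1|.
  rewrite -(cardsID F (leaders p R)); congr (_ + _); apply: eq_card => v;
  by rewrite !inE -!val_eqE; case: (v \in R); case: ltngtP.
have eR : #|R| = #|F| + #|T1| + #|T2|.
  rewrite -(cardsID F R) -addnA; congr (_ + _).
    by apply: eq_card => v; rewrite !inE; case: (v \in R).
  rewrite -(cardsID T1 (R :\: F)); congr (_ + _); apply: eq_card => v;
  by rewrite !inE -!val_eqE; case: (v \in R); case: ltngtP.
have e12 : #|T2| = #|T1|.
  rewrite -(card_imset T1 (can_inj pK)); apply: eq_card => v; rewrite inE.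
  apply/andP/imsetP => [[vR lt]|[w]]; first by exists (p v); rewrite ?inE ?pK ?pR.
  by rewrite inE => /andP[wR lt] ->; rewrite pK pR.
by rewrite eR eT e12; lia.
Qed.

Section CoMatchings.
Variable G : sgraph.
Local Notation n := (nv G).
Local Notation V := 'I_n.
Local Notation E := (@adj G).
Implicit Types (R I : {set V}) (p : V -> V).

Definition cmatching p := involutive p /\ (forall v, p v != v -> ~~ E v (p v)).

(* Colouring each block of a co-matching by the rank of its leader:
   2 chi(R) <= |R| + #unmatched. *)
Lemma chiS_cmatching p R : cmatching p -> {homo p : v / v \in R} ->
  2 * chiS R <= #|R| + #|unmatched p R|.
Proof.
move=> [pK pE] pR; rewrite card_leaders // leq_mul2l /=.
set T := leaders p R.
pose m (v : V) := if v <= p v then v else p v.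
have mT v : v \in R -> m v \in T.
  move=> vR; rewrite /m inE; case: ifPn => [-> | ]; rewrite ?vR ?pR //= pK.
  by rewrite -ltnNge => /ltnW.
have m_adj u v : E u v -> m u != m v.
  move=> Euv; have uv := adj_neq Euv; rewrite /m.
  case: ifP => _; case: ifP => _; apply: contra_neq (uv) => e.
  - by [].
  - have pv : p v != v by apply: contra_neq uv => pvv; rewrite e pvv.
    by case/negP: (pE v pv); rewrite -e adj_sym.
  - have pu : p u != u by apply: contra_neq uv => puu; rewrite -e puu.
    by case/negP: (pE u pu); rewrite e.
  - exact: can_inj pK _ _ e.
apply/chiS_min/(@colS_intro _ _ _ (fun v => rank_in T (m v))).
- exact/ltnW/card_le_n.
- by move=> v vR; apply/rank_in_lt/mT.
move=> u v uR vR Euv; apply: contra (m_adj u v Euv) => /eqP e.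
by apply/eqP; apply: rank_in_inj e; apply: mT.
Qed.

End CoMatchings.

(* Conversely, when G has no independent 3-set every colour class has at most
   two vertices, so pairing up the colour classes of a k-colouring of G[R]
   gives a co-matching with |R| + #unmatched <= 2k. *)
Section ColourClassPairing.
Variables (G : sgraph) (R : {set 'I_(nv G)}) (k : nat) (c : 'I_(nv G) -> nat).
Local Notation V := 'I_(nv G).
Local Notation E := (@adj G).
Hypothesis indep_le2 : forall I : {set V}, is_indep I -> #|I| <= 2.
Hypothesis c_lt : forall u, u \in R -> c u < k.
Hypothesis c_proper : forall u v, u \in R -> v \in R -> E u v -> c u != c v.

(* A colour class with three vertices would be an independent 3-set. *)
Lemma no_three_same_colour u v w : u \in R -> v \in R -> w \in R ->
  c u = c v -> c v = c w -> u != v -> v != w -> w != u -> False.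
Proof.
move=> uR vR wR cuv cvw uv vw wu.
have same a : a \in [set u; v; w] -> a \in R /\ c a = c u.
  by rewrite !inE => /orP[/orP[]|] /eqP->; split; rewrite // cuv.
suff : #|[set u; v; w]| <= 2.
  by apply/negP; rewrite -ltnNge; apply/card_gt2P; exists u, v, w; rewrite !inE !eqxx ?orbT.
apply/indep_le2/indepP => a b /same[aR ca] /same[bR cb].
by apply/negP => /(c_proper aR bR); rewrite ca cb eqxx.
Qed.

Definition partner (v : V) : V :=
  if v \in R then
    if [pick w in R | (w != v) && (c w == c v)] is Some w then w else v
  else v.

Lemma partnerP v : v \in R ->
  (partner v = v /\ forall w, w \in R -> w != v -> c w != c v) \/
  [/\ partner v \in R, partner v != v & c (partner v) = c v].
Proof.
move=> vR; rewrite /partner vR; case: pickP => [w /andP[wR /andP[wv /eqP cw]]|none].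
  by right.
left; split=> // w wR wv; move: (none w); by rewrite wR wv /= => ->.
Qed.

Lemma partner_out v : v \notin R -> partner v = v.
Proof. by rewrite /partner => /negbTE->. Qed.

Lemma partner_invol : involutive partner.
Proof.
move=> v; case: (boolP (v \in R)) => vR; last by rewrite !partner_out.
case: (partnerP vR) => [[e _]|[wR wv cw]]; first by rewrite !e.
case: (partnerP wR) => [[_ /(_ v vR)]|[w'R w'w cw']].
  by rewrite eq_sym wv cw eqxx => /(_ isT).
apply/eqP; apply/negPn/negP => ne.
by apply: (no_three_same_colour vR wR w'R (esym cw) (esym cw')); rewrite // eq_sym.
Qed.

Lemma partner_stable : {homo partner : v / v \in R}.
Proof. by move=> v vR; case: (partnerP vR) => [[->]|[]]. Qed.

Lemma partner_cmatching : cmatching partner.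
Proof.
split; first exact: partner_invol.
move=> v ne; case: (boolP (v \in R)) => vR; last by rewrite partner_out ?eqxx in ne.
case: (partnerP vR) => [[e _]|[wR _ cw]]; first by rewrite e eqxx in ne.
by apply/negP => /(c_proper vR wR); rewrite cw eqxx.
Qed.

(* Distinct leaders lie in distinct blocks, hence have distinct colours. *)
Lemma card_leaders_partner : #|leaders partner R| <= k.
Proof.
have cinj : {in leaders partner R &, injective c}.
  move=> u v; rewrite !inE => /andP[uR up] /andP[vR vp] cuv.
  apply/eqP/negPn/negP => uv.
  have puv : partner u = v.
    case: (partnerP uR) => [[_ /(_ v vR)]|[wR wu cw]].
      by rewrite eq_sym uv cuv eqxx => /(_ isT).
    apply/eqP/negPn/negP => ne.
    by apply: (no_three_same_colour uR vR wR cuv); rewrite ?cw ?cuv // eq_sym.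
  have pvu : partner v = u by rewrite -puv partner_invol.
  move: up vp; rewrite puv pvu => uv1 vu1.
  by move: uv; rewrite -(inj_eq val_inj) eqn_leq uv1 vu1.
case: k c_lt => [|k'] ck.
  rewrite leqn0 cards_eq0; apply/eqP/setP=> v; rewrite !inE.
  by apply/negP=> /andP[/ck].
rewrite -[k'.+1]card_ord; apply: (leq_card_in (fun v => inord (c v) : 'I_k'.+1)).
move=> u v uT vT /(congr1 val); rewrite /= !inordK; first exact: cinj.
- by move: vT; rewrite inE => /andP[/ck].
- by move: uT; rewrite inE => /andP[/ck].
Qed.

End ColourClassPairing.

Lemma cmatching_of_colouring (G : sgraph) (R : {set 'I_(nv G)}) k :
  (forall I : {set 'I_(nv G)}, is_indep I -> #|I| <= 2) -> colS R k ->
  exists p, [/\ cmatching p, {homo p : v / v \in R},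
                (forall v, v \notin R -> p v = v) &
                #|R| + #|unmatched p R| <= 2 * k].
Proof.
move=> a2 /colS_elim[c [ck cp]].
exists (partner R c); split.
- exact: partner_cmatching.
- exact: partner_stable.
- exact: partner_out.
rewrite card_leaders ?leq_mul2l ?card_leaders_partner //.
  exact: partner_invol.
exact: partner_stable.
Qed.

Lemma iter_period (T : finType) (f : T -> T) (f_inj : injective f) x m :
  (iter m f x == x) = (order f x %| m).
Proof.
have L0 : 0 < order f x by apply: order_gt0.
have itL k : iter (k * order f x) f x = x.
  by elim: k => [|k IH] //; rewrite mulSn iterD IH iter_order.
rewrite {1}(divn_eq m (order f x)) addnC iterD itL /dvdn.
have [-> | ne] := eqVneq (m %% order f x) 0; first by rewrite eqxx.
apply/negbTE; apply: contra ne => /eqP e.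
by have := findex_iter (ltn_pmod m L0); rewrite e findex0 => <-.
Qed.

(* Two involutions p, q and their product r = q o p, which describes the
   symmetric difference of two matchings.  Conjugation by p reverses r, so
   the r-cycle of a p-fixed vertex is an alternating path reflected by p and
   q, and its fixed points of p and q lie at its two ends. *)
Section TwoInvolutions.
Variables (T : finType) (p q : T -> T).
Hypotheses (pK : involutive p) (qK : involutive q).
Let r v := q (p v).

Lemma r_inj : injective r.
Proof. by move=> a b; rewrite /r => /(can_inj qK)/(can_inj pK). Qed.

Lemma iter_r_reflect k w : iter k r (p (iter k r w)) = p w.
Proof.
elim: k w => [|k IH] w //.
by rewrite iterSr -[iter k.+1 r w]/(r (iter k r w)) /r pK qK IH.
Qed.

Lemma orbit_stable a : p a = a -> forall w, fconnect r a w ->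
  fconnect r a (p w) /\ fconnect r a (q w).
Proof.
move=> pa w aw.
have apw : fconnect r a (p w).
  rewrite (fconnect_sym r_inj).
  have := iter_r_reflect (findex r a w) a; rewrite (iter_findex aw) pa => <-.
  exact: fconnect_iter.
split=> //; have -> : q w = r (p w) by rewrite /r pK.
by apply: connect_trans apw (connect1 _); rewrite /= eqxx.
Qed.

(* Two distinct p-fixed vertices force the cycle to have even length, a
   q-fixed vertex forces odd length: they cannot share a cycle. *)
Lemma orbit_no_three a b t : p a = a -> p b = b -> a != b -> q t = t ->
  fconnect r a b -> fconnect r a t -> False.
Proof.
move=> pa pb ab qt arb art; set L := order r a.
have L0 : 0 < L by apply: order_gt0.
set k := findex r a b; set j := findex r a t.
have ev : iter k r a = b by apply: iter_findex.
have et : iter j r a = t by apply: iter_findex.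
have Lkk : L %| k + k.
  rewrite -(iter_period r_inj) iterD ev; apply/eqP.
  by have := iter_r_reflect k a; rewrite ev pb pa.
have Lk : ~~ (L %| k) by rewrite -(iter_period r_inj) ev eq_sym.
have Ljj : L %| (j + j) + L.-1.
  have rpt : r (p t) = t by rewrite /r pK qt.
  have jj : iter (j + j) r a = r a.
    rewrite iterD et -{1}rpt.
    by have := iter_r_reflect j a; rewrite et pa => e; rewrite -iterSr iterS e.
  rewrite -(iter_period r_inj) addnC iterD jj -iterSr prednK //.
  by rewrite iter_order //; exact: r_inj.
have [oL | eL] := boolP (odd L).
  move: Lk; rewrite -(Gauss_dvdr _ (_ : coprime L 2)) ?coprimen2 //.
  by rewrite mul2n -addnn Lkk.
have : 2 %| L by rewrite dvdn2 eL.
move/dvdn_trans/(_ Ljj); rewrite dvdn2 oddD addnn odd_double /=.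
by move: eL; rewrite -{1}(prednK L0) /= => /negbNE ->.
Qed.

End TwoInvolutions.

(* By [chiS_cmatching] every co-matching satisfies
   2 chi(G) <= |V| + #unmatched; an optimal one attains equality, i.e. it is
   a maximum matching of the complement of G. *)
Section Gallai.
Variable G : sgraph.
Local Notation n := (nv G).
Local Notation V := 'I_n.
Local Notation E := (@adj G).
Local Notation chiT := (chiS [set: V]).
Implicit Types (O : {set V}) (p q : V -> V).

Definition optimal p := cmatching p /\ #|unmatched p [set: V]| + n <= 2 * chiT.

Lemma optimal_lb p : cmatching p -> 2 * chiT <= n + #|unmatched p [set: V]|.
Proof.
move=> mp; have := chiS_cmatching mp (fun v _ => in_setT (p v)).
by rewrite cardsT card_ord.
Qed.

(* Two unmatched vertices of an optimal co-matching are adjacent: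
   otherwise matching them together would beat it. *)
Lemma optimal_unmatched_adj p a b : optimal p ->
  p a = a -> p b = b -> a != b -> E a b.
Proof.
move=> [[pK pE] opt] pa pb ab; apply/negPn/negP => nEab.
have ba : b != a by rewrite eq_sym.
pose p' v := if v == a then b else if v == b then a else p v.
have p'K : involutive p'.
  move=> v; rewrite /p'; have [->|va] := eqVneq v a; first by rewrite (negbTE ba) eqxx.
  have [->|vb] := eqVneq v b; first by rewrite eqxx.
  have -> : (p v == a) = false by apply/eqP=> e; case/eqP: va; rewrite -[v]pK e pa.
  have -> : (p v == b) = false by apply/eqP=> e; case/eqP: vb; rewrite -[v]pK e pb.
  exact: pK.
have p'E : forall v, p' v != v -> ~~ E v (p' v).
  move=> v; rewrite /p'; have [->|_] := eqVneq v a; first by move=> _.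
  have [->|_] := eqVneq v b; first by rewrite adj_sym.
  exact: pE.
have unm' : unmatched p' [set: V] = unmatched p [set: V] :\ a :\ b.
  apply/setP=> v; rewrite !inE /p'.
  have [->|va] := eqVneq v a; first by rewrite (negbTE ba) /= andbF.
  by have [->|vb] := eqVneq v b; rewrite /= ?eqxx ?(negbTE ab).
have := optimal_lb (conj p'K p'E); rewrite unm'.
have := cardsD1 a (unmatched p [set: V]); rewrite !inE pa eqxx /=.
have := cardsD1 b (unmatched p [set: V] :\ a); rewrite !inE pb eqxx ba /=.
by move: opt; card_lia.
Qed.

Definition mix O p q v : V := if v \in O then p v else q v.

Lemma mix_cmatching O p q : cmatching p -> cmatching q ->
  {homo p : v / v \in O} -> {homo q : v / v \notin O} -> cmatching (mix O p q).
Proof.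
move=> [pK pE] [qK qE] pO qO; split=> v; rewrite /mix; case: (boolP (v \in O)) => vO.
- by rewrite pO // pK.
- by rewrite (negbTE (qO v vO)) qK.
- exact: pE.
- exact: qE.
Qed.

Lemma card_unmatched_mix O p q :
  #|unmatched (mix O p q) [set: V]| + #|unmatched (mix O q p) [set: V]| =
  #|unmatched p [set: V]| + #|unmatched q [set: V]|.
Proof.
have inO p1 q1 : #|unmatched (mix O p1 q1) O| = #|unmatched p1 O|.
  by apply: eq_card => v; rewrite !inE /mix; case: (v \in O).
have offO p1 q1 : #|unmatched (mix O p1 q1) (~: O)| = #|unmatched q1 (~: O)|.
  by apply: eq_card => v; rewrite !inE /mix; case: (v \in O).
by rewrite !(card_unmatched_split _ O) !inO !offO; lia.
Qed.

(* If O is closed under two optimal co-matchings p and q, then gluing p on O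
   with q off O is optimal: the two possible gluings have as many unmatched
   vertices in total as p and q, and neither can beat the optimum. *)
Lemma mix_optimal O p q : optimal p -> optimal q ->
  {homo p : v / v \in O} -> {homo q : v / v \in O} -> optimal (mix O p q).
Proof.
move=> [mp op] [mq oq] pO qO.
have offO r : involutive r -> {homo r : v / v \in O} -> {homo r : v / v \notin O}.
  by move=> rK rO v; apply: contra => /rO; rewrite rK.
have mpq : cmatching (mix O p q) by apply: mix_cmatching => //; exact: offO mq.1 qO.
have mqp : cmatching (mix O q p) by apply: mix_cmatching => //; exact: offO mp.1 pO.
split=> //; have := optimal_lb mqp; have := card_unmatched_mix O p q; lia.
Qed.

(* The alternating cycle of
   q o p through t cannot contain both u and v; gluing p and q along the
   cycle of the other one gives an optimal co-matching leaving t and u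
   (or t and v) unmatched. *)
Lemma swap_alternative p u v t : (forall w, exists2 q, optimal q & q w = w) ->
  optimal p -> p u = u -> p v = v -> u != v ->
  (exists p', [/\ optimal p', p' u = u & p' t = t]) \/
  (exists p', [/\ optimal p', p' v = v & p' t = t]).
Proof.
move=> avoid op pu pv uv; have [q oq qt] := avoid t.
have pK := op.1.1; have qK := oq.1.1; pose r v := q (p v).
have escape a : p a = a -> ~~ fconnect r a t ->
    exists p', [/\ optimal p', p' a = a & p' t = t].
  move=> pa nat; pose O := [set w | fconnect r a w].
  exists (mix O p q); split.
  - by apply: mix_optimal => // w; rewrite !inE => /(orbit_stable pK qK pa)[].
  - by rewrite /mix inE connect0.
  - by rewrite /mix inE (negbTE nat).
have [ut|] := boolP (fconnect r u t); last by left; apply: escape.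
have [vt|] := boolP (fconnect r v t); last by right; apply: escape.
exfalso; apply: (orbit_no_three pK qK pu pv uv qt) => //.
by apply: connect_trans ut _; rewrite (fconnect_sym (r_inj pK qK)).
Qed.

Definition nonadj := [rel a b : V | (a != b) && ~~ E a b].

Lemma nonadj_connected : ~ separable G -> forall a b, connect nonadj a b.
Proof.
move=> nsep a b; apply/idPn => nab; apply: nsep.
exists [set w | connect nonadj a w]; split; [|split].
- by apply/set0Pn; exists a; rewrite inE connect0.
- by apply/set0Pn; exists b; rewrite !inE.
move=> u w; rewrite !inE => au; apply: contraNT => nE.
have [<- // | uw] := eqVneq u w.
by apply: connect_trans au (connect1 _); rewrite /= uw nE.
Qed.

Section FactorCritical.
Hypothesis avoid : forall w, exists2 q, optimal q & q w = w.

Lemma optimal_path_ends s v : forall u p, path nonadj u s -> last u s = v ->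
  optimal p -> p u = u -> p v = v -> u = v.
Proof.
elim: s => [|t s IH] u p /=; first by move=> _ ->.
move=> /andP[/andP[ut nut] pth] lst op pu pv.
have [// | uv] := eqVneq u v; exfalso.
have tv : t != v by apply: contraNneq nut => ->; rewrite (optimal_unmatched_adj op).
case: (swap_alternative t avoid op pu pv uv) => [[p' [op' p'u p't]]|[p' [op' p'v p't]]].
  by move: nut; rewrite (optimal_unmatched_adj op' p'u p't ut).
by move/eqP: tv; apply; apply: (IH t p').
Qed.

Lemma optimal_one_unmatched (conn : forall a b, connect nonadj a b) p :
  optimal p -> #|unmatched p [set: V]| <= 1.
Proof.
move=> op; rewrite leqNgt; apply/negP=> /card_gt1P[u [v [uF vF uv]]].
move: uF vF; rewrite !inE => /eqP pu /eqP pv.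
have /connectP[s pth lst] := conn u v.
by move/eqP: uv; apply; apply: (optimal_path_ends pth (esym lst) op pu pv).
Qed.

End FactorCritical.

End Gallai.

Section MinimalGraph.
Variables (x y : int) (G : sgraph).
Hypothesis x_ge0 : (0 <= x)%R.
Hypothesis G_inM : inM x y G.
Hypothesis G_min : forall G', inM x y G' -> nv G <= nv G'.
Local Notation n := (nv G).
Local Notation V := 'I_n.
Local Notation E := (@adj G).
Local Notation chiT := (chiS [set: V]).
Local Notation clT := (clS [set: V]).
Local Notation fT := (fS [set: V]).
Implicit Types (R I : {set V}).

Lemma G_bounds : (n%:Z < chiT%:Z + 2 * fT - x)%R /\ (fT <= y)%R.
Proof. by move: G_inM; rewrite /inM /f chi_setT cl_setT. Qed.

Lemma not_inM_proper R : #|R| < n -> (fS R <= y)%R ->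
  ((chiS R)%:Z + 2 * fS R - x <= #|R|%:Z)%R.
Proof.
move=> Rn fy; rewrite leNgt; apply/negP => lt.
have [chiR clR] := induced_invariants R.
have : inM x y (induced R) by rewrite /inM /f chiR clR.
by move/G_min; rewrite /= leqNgt Rn.
Qed.

Lemma fT_gt0 : (0 < fT)%R.
Proof. by have [+ _] := G_bounds; have := chiS_le_n [set: V]; move: x_ge0; lia. Qed.

(* Criticality: every proper induced subgraph has a smaller excess.
   Otherwise, by discrete continuity, some proper G[R'] has excess exactly
   f(G), and then |V \ R'| >= chi(G) - chi(R') puts G[R'] in M(x,y). *)
Lemma fS_proper_lt R : #|R| < n -> (fS R < fT)%R.
Proof.
move=> Rn; rewrite ltNge; apply/negP => fR.
have [R' sR' fR'] := fS_intermediate (ltW fT_gt0) fR.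
have R'n : #|R'| < n := leq_ltn_trans (subset_leq_card sR') Rn.
have [inMG fy] := G_bounds.
have := not_inM_proper R'n; rewrite fR' => /(_ fy).
have := chiS_split R'; have := cardsC R'; rewrite card_ord.
by move: inMG; card_lia.
Qed.

Lemma remove_indep I : is_indep I -> 0 < #|I| ->
  chiS (~: I) + 1 = chiT /\ clS (~: I) = clT.
Proof.
move=> Ii I0.
have lt : (fS (~: I) < fT)%R.
  by apply: fS_proper_lt; move: I0; have := cardsC I; rewrite card_ord; lia.
have := chiS_indep [set: V] Ii; have := clS_mono (subsetT (~: I)).
rewrite setTD; move: lt; rewrite /fS; card_lia.
Qed.

(* Comparing G with G[V \ I] in M(x,y). *)
Lemma indep_bound I : is_indep I -> 0 < #|I| ->
  (#|I|%:Z + 3 * chiT%:Z <= n%:Z + 2 * clT%:Z + x + 3)%R.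
Proof.
move=> Ii I0; have [chiI clI] := remove_indep Ii I0.
have [inMG fy] := G_bounds.
have In : #|~: I| < n by move: I0; have := cardsC I; rewrite card_ord; lia.
have := not_inM_proper In; have := cardsC I; rewrite card_ord /fS clI.
by move: chiI fy; rewrite /fS; card_lia.
Qed.

Lemma indep_le2 I : is_indep I -> #|I| <= 2.
Proof.
move=> Ii; have [-> // | I0] := posnP #|I|.
have := indep_bound Ii I0; have [+ _] := G_bounds; rewrite /fS; lia.
Qed.

(* Every vertex w is left unmatched by an optimal co-matching: pair up the
   colour classes of an optimal colouring of G - w. *)
Lemma every_vertex_avoidable w : exists2 p : V -> V, optimal p & p w = w.
Proof.
have w1 : 0 < #|[set w]| by rewrite cards1.
have [chiw _] := remove_indep (indep1 w) w1.
have [p [mp _ pout cardp]] := cmatching_of_colouring indep_le2 (chiS_col (~: [set w])).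
have pw : p w = w by apply: pout; rewrite !inE negbK eqxx.
exists p => //; split=> //.
have := card_unmatched_split p (~: [set w]); rewrite setCK.
have -> : unmatched p [set w] = [set w].
  by apply/setP=> v; rewrite !inE; case: eqP => // ->; rewrite pw eqxx.
have := cardsC [set w]; rewrite cards1 card_ord.
by move: chiw cardp; card_lia.
Qed.

Lemma nv_pos : 0 < n.
Proof. by have := fT_gt0; have := chiS_le_n [set: V]; rewrite /fS; lia. Qed.

(* Gallai's lemma applies to G: |V| = 2 chi(G) - 1. *)
Lemma nv_twice_chi : ~ separable G -> n.+1 = 2 * chiT.
Proof.
move=> nsep; pose w := Ordinal nv_pos.
have [p op pw] := every_vertex_avoidable w.
have le1 := optimal_one_unmatched every_vertex_avoidable (nonadj_connected nsep) op.
have ge1 : 0 < #|unmatched p [set: V]| by apply/card_gt0P; exists w; rewrite !inE pw eqxx.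
by have := optimal_lb op.1; have := op.2; move: le1 ge1; card_lia.
Qed.

(* G is not complete, as chi(G) > cl(G). *)
Lemma exists_nonedge : exists u v : V, u != v /\ ~~ E u v.
Proof.
have [/existsP[u /existsP[v /andP[uv nE]]] | none] :=
  boolP [exists u : V, exists v : V, (u != v) && ~~ E u v]; first by exists u, v.
have : n <= clT.
  rewrite -[X in X <= _]card_ord -cardsT; apply: clS_max => //.
  apply/cliqueP => u v _ _ uv; move/existsPn: none => /(_ u)/existsPn/(_ v).
  by rewrite uv /= negbK.
by have := fT_gt0; have := chiS_le_n [set: V]; rewrite /fS; lia.
Qed.

Lemma minimal_structure : ~ separable G ->
  [/\ n.+1 = 2 * chiT, (chiT%:Z = 2 * clT%:Z + x)%R &
      forall I, is_indep I -> #|I| <= 2].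
Proof.
move=> nsep; have nchi := nv_twice_chi nsep; split=> //; last exact: indep_le2.
have [u [v [uv nE]]] := exists_nonedge.
have Ii : is_indep [set u; v].
  by apply/indepP=> a b; rewrite !inE => /orP[]/eqP-> /orP[]/eqP->; rewrite ?adj_irr // adj_sym.
have I2 : #|[set u; v]| = 2 by rewrite cards2 uv.
have I2pos : 0 < #|[set u; v]| by rewrite I2.
have := indep_bound Ii I2pos; rewrite I2.
by have [+ _] := G_bounds; move: nchi; rewrite /fS; card_lia.
Qed.

End MinimalGraph.

Theorem theorem3p1 (x y : int) (G0 : sgraph) :
  (0 <= x)%R ->
  (exists G, inM x y G) ->
  inM x y G0 ->
  (forall G, inM x y G -> nv G0 <= nv G) ->
  ~ separable G0 ->
  ((nv G0)%:Z = 4 * f G0 - 2 * x - 1)%R /\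
  (forall r : nat, is_R3 (f G0 - x + 1)%R r -> (4 * f G0 - 2 * x - 1 < r%:Z)%R).
Proof.
move=> x_ge0 _ G0_inM G0_min nsep.
have [nchi chi_cl indep2] := minimal_structure x_ge0 G0_inM G0_min nsep.
rewrite /f chi_setT cl_setT; split; first by move: nchi chi_cl; card_lia.
move=> r [ramsey _]; rewrite ltNge; apply/negP => r_le.
have /ramsey[[K [cK cardK]] | [I [iI cardI]]] : r <= nv G0 by move: nchi chi_cl r_le; card_lia.
- by have := clS_max (subsetT K) cK; move: cardK chi_cl; card_lia.
- by have := indep2 I iI; rewrite cardI.
Qed.
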